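(* For $n \geq 4$, the collapsibility number of $\mathcal{VR}(\mathbb{I}_n;3)$ is $8$.
   Context: For $n\ge 1$, $\mathbb{I}_n$ is the $n$-dimensional hypercube graph: vertex set $\{0,1\}^n$, two vertices adjacent iff they differ in exactly one coordinate; it is a metric space with the shortest-path (Hamming) distance $d(v,w)=\#\{i: v(i)\ne w(i)\}$. For a metric space $(X,d)$ and $r\ge0$, $\mathcal{VR}(X;r)$ is the simplicial complex on vertex set $X$ whose simplices are the finite subsets of diameter at most $r$. For a finite simplicial complex $\Delta$: if $\gamma\in\Delta$ with $|\gamma|\le d$ is contained in a unique maximal simplex $\sigma$ of $\Delta$, the elementary $d$-collapse removes all simplices $\tau$ with $\gamma\subseteq\tau\subseteq\sigma$. $\Delta$ is $d$-collapsible if a sequence of elementary $d$-collapses reduces $\Delta$ to the void complex $\emptyset$. The collapsibility number of $\Delta$ is the minimal $d$ such that $\Delta$ is $d$-collapsible. *)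

From mathcomp Require Import all_boot.
From Stdlib Require Import Relations.Relation_Operators.
Set Implicit Arguments. Unset Strict Implicit. Unset Printing Implicit Defensive.

Definition cube (n : nat) := {ffun 'I_n -> bool}.

(* Hamming (= shortest-path) distance on I_n. *)
Definition hamming (n : nat) (v w : cube n) : nat := #|[set i | v i != w i]|.

(* A finite simplicial complex on a finite vertex type T is represented by its
   set of faces (including the empty face when nonempty). *)
Definition complex (T : finType) := {set {set T}}.

Definition VR (T : finType) (d : T -> T -> nat) (r : nat) : complex T :=
  [set A : {set T} | [forall x in A, forall y in A, d x y <= r]].

Definition VR_cube (n r : nat) : complex (cube n) := VR (@hamming n) r.

Definition maximal_face (T : finType) (K : complex T) (s : {set T}) : Prop :=
  s \in K /\ forall t, t \in K -> s \subset t -> t = s.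

Definition elem_collapse (T : finType) (d : nat) (K K' : complex T) : Prop :=
  exists (g s : {set T}),
    [/\ g \in K, #|g| <= d,
        maximal_face K s /\ g \subset s,
        (forall s', maximal_face K s' -> g \subset s' -> s' = s) &
        K' = K :\: [set t : {set T} | (g \subset t) && (t \subset s)]].

Definition d_collapsible (T : finType) (d : nat) (K : complex T) : Prop :=
  clos_refl_trans _ (@elem_collapse T d) K set0.

Definition is_collapsibility_number (T : finType) (K : complex T) (c : nat) : Prop :=
  d_collapsible c K /\ forall d, d_collapsible d K -> c <= d.

From mathcomp Require Import all_boot zify.
From Stdlib Require Import Relations.Relation_Operators.
Set Implicit Arguments. Unset Strict Implicit. Unset Printing Implicit Defensive.

(* Upper bound: if the deletion of a vertex is (d+1)-collapsible and its link
   is d-collapsible, the complex is (d+1)-collapsible, and a cone is as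
   collapsible as its base.  In VR(I_n; 3) the link of a vertex v is the
   Vietoris-Rips complex on its ball of radius 3; removing the vertices at
   distance 3 one at a time (each costing one dimension) leaves, after four
   of them, a common neighbourhood in which every further vertex at distance
   3 is a cone point (its difference set with v shares the 2-point core of a
   sunflower), and the vertices at distance 1 and 2 need only 3 more steps.
   Hence 1 + 4 + 3 = 8.

   Lower bound: on the 4-dimensional subcube the complex induces the boundary
   of a cross-polytope, whose 16 vertices come in 8 antipodal pairs at
   distance 4.  A free face g of size at most 7 misses some antipodal pair
   {a, a'}; both a + g and a' + g are faces, so the unique maximal face above
   g would contain a and a'.  Thus no d-collapse with d <= 7 can remove a face
   of this subcomplex, and the complex never becomes void. *)

Section Collapse.
Variable T : finType.
Implicit Types (v : T) (s t g : {set T}) (D K L : complex T).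

Definition avoids v K := forall t, t \in K -> v \notin t.

(* The complex with deletion [D] and link [L] at [v]: its faces avoiding [v]
   are those of [D], its faces through [v] are the cones [v |: t], [t \in L]. *)
Definition glue v D L : complex T :=
  [set t : {set T} | if v \in t then t :\ v \in L else t \in D].

Lemma elem_collapse_sub d K K' : elem_collapse d K K' -> K' \subset K.
Proof. by case=> g [s] [_ _ _ _ ->]; apply: subsetDl. Qed.

Lemma collapse_seq_sub d K K' :
  clos_refl_trans _ (elem_collapse d) K K' -> K' \subset K.
Proof.
elim=> [|K0|K1 K2 K3 _ sub21 _ sub32]; [exact: elem_collapse_sub | exact: subxx |].
exact: subset_trans sub32 sub21.
Qed.

Lemma collapsible_leq d e K : d <= e -> d_collapsible d K -> d_collapsible e K.
Proof.
move=> le_de; rewrite /d_collapsible.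
elim=> [K1 K2 [g [s [? cg ? ? ?]]]|K1|K1 K2 K3 _ c12 _ c23].
- by apply: rt_step; exists g, s; split; rewrite ?(leq_trans cg le_de).
- exact: rt_refl.
- exact: rt_trans c12 c23.
Qed.

Lemma collapsible_point d : d_collapsible d [set set0 : {set T}].
Proof.
apply: rt_step; exists set0, set0; split; rewrite ?inE ?cards0 //.
- by split=> //; split=> [|t]; rewrite ?inE // => /eqP.
- by move=> s [] /[!inE] /eqP.
- by apply/setP => t; rewrite !inE sub0set subset0 andNb.
Qed.

Lemma maximal_face_exists L t :
  t \in L -> exists2 s, maximal_face L s & t \subset s.
Proof.
by move=> tL; have [s /maxsetP ms ts] := @maxset_exists _ (fun A => A \in L) t tL; exists s.
Qed.

Lemma maximal_glue_cone v D L s :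
  avoids v L -> maximal_face L s -> maximal_face (glue v D L) (v |: s).
Proof.
move=> Lv [sL smax]; split=> [|t]; first by rewrite inE setU11 setU1K ?Lv.
rewrite inE => + vs_t; have vt : v \in t by rewrite (subsetP vs_t) ?setU11.
rewrite vt => tL; have st : s \subset t :\ v.
  by rewrite subsetD1 Lv // andbT (subset_trans (subsetU1 _ _) vs_t).
by rewrite -(smax _ tL st) setD1K.
Qed.

Lemma maximal_glue_link v D L s :
  avoids v L -> v \in s -> maximal_face (glue v D L) s -> maximal_face L (s :\ v).
Proof.
move=> Lv vs [sK smax]; split=> [|t tL st]; first by move: sK; rewrite inE vs.
have /smax : v |: t \in glue v D L by rewrite inE setU11 setU1K ?Lv.
by rewrite -{1}(setD1K vs) => /(_ (setUS _ st)) <-; rewrite setU1K ?Lv.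
Qed.

Lemma elem_collapse_glue_link d v D L L' :
  avoids v L -> elem_collapse d L L' -> elem_collapse d.+1 (glue v D L) (glue v D L').
Proof.
move=> Lv [g [s [gL cg [sm gs] suniq ->]]]; have vg := Lv _ gL.
exists (v |: g), (v |: s); split.
- by rewrite inE setU11 setU1K.
- by rewrite cardsU1 vg.
- by split; [exact: maximal_glue_cone | exact: setUS].
- move=> s' s'm gs'; have vs' : v \in s' by rewrite (subsetP gs') ?setU11.
  have gs'v : g \subset s' :\ v.
    by rewrite subsetD1 vg andbT (subset_trans (subsetU1 _ _) gs').
  by rewrite -(setD1K vs') (suniq _ (maximal_glue_link Lv vs' s'm) gs'v).
- apply/setP => t; rewrite !inE; case vt: (v \in t); last by rewrite subUset sub1set vt.
  by rewrite subsetD1 vg subDset subUset sub1set vt andbT.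
Qed.

Lemma elem_collapse_glue_cone d v L L' :
  avoids v L -> elem_collapse d L L' -> elem_collapse d (glue v L L) (glue v L' L').
Proof.
move=> Lv [g [s [gL cg [sm gs] suniq ->]]]; have vg := Lv _ gL.
exists g, (v |: s); split.
- by rewrite inE (negbTE vg).
- done.
- by split; [exact: maximal_glue_cone | exact: subset_trans gs (subsetU1 _ _)].
- move=> s' s'm gs'; have [vs'|nvs'] := boolP (v \in s').
    have gs'v : g \subset s' :\ v by rewrite subsetD1 vg andbT.
    by rewrite -(setD1K vs') (suniq _ (maximal_glue_link Lv vs' s'm) gs'v).
  (* a maximal face avoiding [v] would not be maximal: the cone over it is larger *)
  case: s'm => s'K /(_ (v |: s')) s'max; move: s'K; rewrite inE (negbTE nvs') => s'L.
  have := s'max; rewrite inE setU11 setU1K // => /(_ s'L (subsetU1 _ _)) e.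
  by move: nvs'; rewrite -e setU11.
- apply/setP => t; rewrite !inE; case vt: (v \in t).
    by rewrite !subsetD1 vg subDset andbT.
  by rewrite -subDset (setDidPl _) // disjoint_sym disjoints1 vt.
Qed.

Lemma collapse_seq_glue d e v (F : complex T -> complex T) K K' :
  (forall L L', avoids v L -> elem_collapse d L L' -> elem_collapse e (F L) (F L')) ->
  avoids v K -> clos_refl_trans _ (elem_collapse d) K K' ->
  clos_refl_trans _ (elem_collapse e) (F K) (F K').
Proof.
move=> lift + c; elim: c => [L L' st Lv|L _|L1 L2 L3 c12 IH12 _ IH23 Lv].
- exact/rt_step/lift.
- exact: rt_refl.
- apply: rt_trans (IH12 Lv) (IH23 _) => t /(subsetP (collapse_seq_sub c12)).
  exact: Lv.
Qed.

Lemma collapsible_glue d v D L :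
  avoids v D -> avoids v L -> d_collapsible d L -> d_collapsible d.+1 D ->
  d_collapsible d.+1 (glue v D L).
Proof.
move=> Dv Lv cL cD; apply: rt_trans cD.
have eD : glue v D set0 = D.
  apply/setP => t; rewrite inE in_set0; case: ifPn => // vt.
  by apply/esym/negP => /Dv; rewrite vt.
rewrite -{2}eD; exact: collapse_seq_glue (@elem_collapse_glue_link d v D) Lv cL.
Qed.

Lemma collapsible_cone d v L :
  avoids v L -> d_collapsible d L -> d_collapsible d (glue v L L).
Proof.
move=> Lv cL; have e0 : glue v set0 set0 = set0 :> complex T.
  by apply/setP => t; rewrite inE !in_set0 if_same.
rewrite /d_collapsible -e0; exact: collapse_seq_glue (@elem_collapse_glue_cone d v) Lv cL.
Qed.

End Collapse.

Section InducedVR.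
Variables (T : finType) (dist : T -> T -> nat) (r : nat).
Hypotheses (dist_sym : forall x y, dist x y = dist y x) (dist_refl : forall x, dist x x = 0).
Implicit Types (A U X Y C : {set T}).

Definition VR_on U : complex T :=
  [set A : {set T} | (A \subset U) && [forall x in A, forall y in A, dist x y <= r]].

Definition nbhd x : {set T} := [set y | (y != x) && (dist x y <= r)].

(* Closed under taking induced subcomplexes, as links of induced VR complexes
   are again induced VR complexes. *)
Definition hered_collapsible d X := forall U, U \subset X -> d_collapsible d (VR_on U).

Lemma VR_onP U A :
  reflect (A \subset U /\ {in A &, forall x y, dist x y <= r}) (A \in VR_on U).
Proof.
rewrite inE; apply: (iffP andP) => -[AU Ar]; split=> //.
  by move=> x y xA yA; exact: forall_inP (forall_inP Ar x xA) y yA.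
by apply/forall_inP => x xA; apply/forall_inP => y yA; exact: Ar.
Qed.

Lemma VR_on_avoids U v : v \notin U -> avoids v (VR_on U).
Proof. by move=> vU t /VR_onP[tU _]; apply: contra vU; apply: subsetP. Qed.

Lemma VR_on_glue y U :
  y \in U -> VR_on U = glue y (VR_on (U :\ y)) (VR_on (nbhd y :&: U)).
Proof.
move=> yU; apply/setP => t; rewrite [in RHS]inE.
case: ifPn => yt; apply/VR_onP/VR_onP => -[tU tr]; split=> //.
- apply/subsetP => z /setD1P[zy zt].
  by rewrite !inE zy tr ?(subsetP tU).
- by move=> a b /setD1P[_ ?] /setD1P[_ ?]; apply: tr.
- apply/subsetP => z zt; have [-> //|zy] := eqVneq z y.
  by have /setIP[] : z \in nbhd y :&: U by apply: (subsetP tU); rewrite !inE zy.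
- have ry z : z \in t -> dist y z <= r.
    move=> zt; have [->|zy] := eqVneq z y; first by rewrite dist_refl.
    by have /setIP[/setIdP[]] : z \in nbhd y :&: U by apply: (subsetP tU); rewrite !inE zy.
  move=> a b ta tb; have [->|ay] := eqVneq a y; first exact: ry.
  have [->|b_y] := eqVneq b y; first by rewrite dist_sym; apply: ry.
  by apply: tr; apply/setD1P.
- by rewrite subsetD1 tU yt.
- exact: subset_trans tU (subD1set _ _).
Qed.

Lemma hered_set0 d : hered_collapsible d set0.
Proof.
move=> U; rewrite subset0 => /eqP ->.
have -> : VR_on set0 = [set set0].
  apply/setP => A; rewrite inE [RHS]inE subset0; case: eqP => [->|] //=.
  by apply/forall_inP => x; rewrite in_set0.
exact: collapsible_point.
Qed.

Lemma hered_sub d X Y : X \subset Y -> hered_collapsible d Y -> hered_collapsible d X.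
Proof. by move=> XY cY U UX; apply: cY; apply: subset_trans UX XY. Qed.

Lemma hered_leq d e X : d <= e -> hered_collapsible d X -> hered_collapsible e X.
Proof. by move=> de cX U UX; apply: collapsible_leq de (cX U UX). Qed.

Lemma hered_peel d X Y :
  hered_collapsible d (X :\: Y) ->
  (forall U y, U \subset X -> y \in U :&: Y ->
     d_collapsible d (VR_on (U :\ y)) -> d_collapsible d (VR_on U)) ->
  hered_collapsible d X.
Proof.
move=> cXY peel U; have [k] := ubnP #|U :&: Y|; elim: k U => // k IH U ltUk UX.
have [UY0|[y yUY]] := set_0Vmem (U :&: Y).
  apply: cXY; apply/subsetP => z zU; rewrite inE (subsetP UX) // andbT.
  by apply/negP => zY; have := in_set0 z; rewrite -UY0 inE zU zY.
apply: (peel _ y UX yUY); apply: IH; last exact: subset_trans (subD1set _ _) UX.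
rewrite -ltnS; apply: leq_trans ltUk; apply: proper_card; rewrite properE setSI ?subD1set //=.
by apply/subsetPn; exists y; rewrite // !inE eqxx.
Qed.

Lemma hered_cone d X C :
  (forall c z, c \in C :&: X -> z \in X -> z != c -> dist c z <= r) ->
  hered_collapsible d (X :\: C) -> hered_collapsible d X.
Proof.
move=> apex cXC; apply: hered_peel cXC _ => U c UX /setIP[cU cC] cU'.
have e : nbhd c :&: U = U :\ c.
  apply/setP => z; rewrite !inE -andbA; have [//|zc] /= := eqVneq z c.
  case zU: (z \in U); rewrite ?andbF ?andbT //.
  by apply: apex zc; rewrite ?inE ?cC ?(subsetP UX).
rewrite (VR_on_glue cU) e; apply: collapsible_cone cU'.
by apply: VR_on_avoids; rewrite setD11.
Qed.

Lemma hered_elim d X Y :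
  hered_collapsible d.+1 (X :\: Y) ->
  (forall y, y \in X :&: Y -> hered_collapsible d (nbhd y :&: X)) ->
  hered_collapsible d.+1 X.
Proof.
move=> cXY clink; apply: hered_peel cXY _ => U y UX yUY cUy.
have /setIP[yU yY] := yUY; rewrite (VR_on_glue yU).
apply: collapsible_glue cUy; try by apply: VR_on_avoids; rewrite !inE eqxx.
by apply: (clink y); rewrite ?inE ?(subsetP UX) ?yY ?setIS.
Qed.

Lemma hered_local d X :
  (forall y, y \in X -> hered_collapsible d (nbhd y :&: X)) -> hered_collapsible d.+1 X.
Proof.
move=> clink; apply: (hered_elim (Y := X)); first by rewrite setDv; apply: hered_set0.
by move=> y /setIP[yX _]; apply: clink.
Qed.

Lemma hered_clique d X :
  {in X &, forall x y, y != x -> dist x y <= r} -> hered_collapsible d X.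
Proof.
move=> Xr; apply: (hered_cone (C := X)); last by rewrite setDv; apply: hered_set0.
by move=> c z /setIP[cX _] zX; apply: Xr.
Qed.

End InducedVR.

Section Venn.
Variables (I : finType) (A1 A2 A3 A4 A5 : {set I}).

Definition venn_region b1 b2 b3 b4 b5 :=
  #|[set i | [&& (i \in A1) == b1, (i \in A2) == b2, (i \in A3) == b3,
                 (i \in A4) == b4 & (i \in A5) == b5]]|.

Lemma card_venn (X : {set I}) (f : bool -> bool -> bool -> bool -> bool -> bool) :
  (forall i, (i \in X) = f (i \in A1) (i \in A2) (i \in A3) (i \in A4) (i \in A5)) ->
  #|X| = \sum_(b1 : bool) \sum_(b2 : bool) \sum_(b3 : bool) \sum_(b4 : bool)
           \sum_(b5 : bool) f b1 b2 b3 b4 b5 * venn_region b1 b2 b3 b4 b5.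
Proof.
have card_sum (S : {set I}) : #|S| = \sum_i (i \in S : nat).
  by rewrite -sum1_card big_mkcond /=; apply: eq_bigr => i _; case: (i \in S).
move=> Xf; rewrite !big_bool /venn_region !card_sum !big_distrr -!big_split /=.
apply: eq_bigr => i _; rewrite !inE Xf.
by case: (i \in A1); case: (i \in A2); case: (i \in A3); case: (i \in A4);
  case: (i \in A5); rewrite /= ?muln0 ?muln1 ?addn0 ?add0n.
Qed.

End Venn.

(* Expresses [#|X|] as a sum over the 32 Venn regions of five sets, so that
   cardinality constraints become linear in the region sizes. *)
Ltac venn A1 A2 A3 A4 A5 X f :=
  have := @card_venn _ A1 A2 A3 A4 A5 X f (fun i => ltac:(by rewrite ?inE));
  rewrite !big_bool /=.

Section SetSystems.
Variable I : finType.
Implicit Types B C D E F P Q R Z : {set I}.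

Lemma transversal_pairs_meet P Q R (R1 R2 : {set I}) :
  #|P| = 2 -> #|Q| = 2 -> #|R| = 2 -> #|R1| = 2 -> #|R2| = 2 ->
  #|P :&: Q| = 1 -> #|P :&: R| = 1 -> #|Q :&: R| = 1 ->
  #|P :&: R1| = 1 -> #|Q :&: R1| = 1 -> #|R :&: R1| = 1 ->
  #|P :&: R2| = 1 -> #|Q :&: R2| = 1 -> #|R :&: R2| = 1 ->
  #|R1 :&: R2| <= 1 -> #|R1 :&: R2| = 1.
Proof.
move=> *.
venn P Q R R1 R2 P (fun b _ _ _ _ : bool => b).
venn P Q R R1 R2 Q (fun _ b _ _ _ : bool => b).
venn P Q R R1 R2 R (fun _ _ b _ _ : bool => b).
venn P Q R R1 R2 R1 (fun _ _ _ b _ : bool => b).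
venn P Q R R1 R2 R2 (fun _ _ _ _ b : bool => b).
venn P Q R R1 R2 (P :&: Q) (fun b c _ _ _ : bool => b && c).
venn P Q R R1 R2 (P :&: R) (fun b _ c _ _ : bool => b && c).
venn P Q R R1 R2 (P :&: R1) (fun b _ _ c _ : bool => b && c).
venn P Q R R1 R2 (P :&: R2) (fun b _ _ _ c : bool => b && c).
venn P Q R R1 R2 (Q :&: R) (fun _ b c _ _ : bool => b && c).
venn P Q R R1 R2 (Q :&: R1) (fun _ b _ c _ : bool => b && c).
venn P Q R R1 R2 (Q :&: R2) (fun _ b _ _ c : bool => b && c).
venn P Q R R1 R2 (R :&: R1) (fun _ _ b c _ : bool => b && c).
venn P Q R R1 R2 (R :&: R2) (fun _ _ b _ c : bool => b && c).
venn P Q R R1 R2 (R1 :&: R2) (fun _ _ _ b c : bool => b && c).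
lia.
Qed.

(* Five 3-sets meeting pairwise in two points cannot all lie in one 4-set,
   so they form a sunflower with a common 2-point core. *)
Lemma triples_sunflower B C D E F :
  #|B| = 3 -> #|C| = 3 -> #|D| = 3 -> #|E| = 3 -> #|F| = 3 ->
  #|B :&: C| = 2 -> #|B :&: D| = 2 -> #|B :&: E| = 2 -> #|B :&: F| = 2 ->
  #|C :&: D| = 2 -> #|C :&: E| = 2 -> #|C :&: F| = 2 ->
  #|D :&: E| = 2 -> #|D :&: F| = 2 -> #|E :&: F| = 2 ->
  #|B :&: C :&: D| = 2.
Proof.
move=> *.
venn B C D E F B (fun b _ _ _ _ : bool => b).
venn B C D E F C (fun _ b _ _ _ : bool => b).
venn B C D E F D (fun _ _ b _ _ : bool => b).
venn B C D E F E (fun _ _ _ b _ : bool => b).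
venn B C D E F F (fun _ _ _ _ b : bool => b).
venn B C D E F (B :&: C) (fun b c _ _ _ : bool => b && c).
venn B C D E F (B :&: D) (fun b _ c _ _ : bool => b && c).
venn B C D E F (B :&: E) (fun b _ _ c _ : bool => b && c).
venn B C D E F (B :&: F) (fun b _ _ _ c : bool => b && c).
venn B C D E F (C :&: D) (fun _ b c _ _ : bool => b && c).
venn B C D E F (C :&: E) (fun _ b _ c _ : bool => b && c).
venn B C D E F (C :&: F) (fun _ b _ _ c : bool => b && c).
venn B C D E F (D :&: E) (fun _ _ b c _ : bool => b && c).
venn B C D E F (D :&: F) (fun _ _ b _ c : bool => b && c).
venn B C D E F (E :&: F) (fun _ _ _ b c : bool => b && c).
venn B C D E F (B :&: C :&: D) (fun b c d _ _ : bool => b && c && d).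
lia.
Qed.

(* B, C, D, F are K + b, K + c, K + d, K + f for a 2-set K; as Z cannot contain
   all of b, c, d, the hypotheses force #|Z| <= 2 * #|K :&: Z|. *)
Lemma sunflower_petal_meet B C D F Z :
  #|B| = 3 -> #|C| = 3 -> #|D| = 3 -> #|F| = 3 ->
  #|B :&: C| = 2 -> #|B :&: D| = 2 -> #|B :&: F| = 2 ->
  #|C :&: D| = 2 -> #|C :&: F| = 2 -> #|D :&: F| = 2 ->
  #|B :&: C :&: D| = 2 -> #|B :&: C :&: F| = 2 ->
  0 < #|Z| <= 3 ->
  #|Z| <= 2 * #|B :&: Z| -> #|Z| <= 2 * #|C :&: Z| -> #|Z| <= 2 * #|D :&: Z| ->
  #|Z| <= 2 * #|F :&: Z|.
Proof.
move=> *.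
venn B C D F Z B (fun b _ _ _ _ : bool => b).
venn B C D F Z C (fun _ b _ _ _ : bool => b).
venn B C D F Z D (fun _ _ b _ _ : bool => b).
venn B C D F Z F (fun _ _ _ b _ : bool => b).
venn B C D F Z Z (fun _ _ _ _ b : bool => b).
venn B C D F Z (B :&: C) (fun b c _ _ _ : bool => b && c).
venn B C D F Z (B :&: D) (fun b _ c _ _ : bool => b && c).
venn B C D F Z (B :&: F) (fun b _ _ c _ : bool => b && c).
venn B C D F Z (B :&: Z) (fun b _ _ _ c : bool => b && c).
venn B C D F Z (C :&: D) (fun _ b c _ _ : bool => b && c).
venn B C D F Z (C :&: F) (fun _ b _ c _ : bool => b && c).
venn B C D F Z (C :&: Z) (fun _ b _ _ c : bool => b && c).
venn B C D F Z (D :&: F) (fun _ _ b c _ : bool => b && c).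
venn B C D F Z (D :&: Z) (fun _ _ b _ c : bool => b && c).
venn B C D F Z (F :&: Z) (fun _ _ _ b c : bool => b && c).
venn B C D F Z (B :&: C :&: D) (fun b c d _ _ : bool => b && c && d).
venn B C D F Z (B :&: C :&: F) (fun b c _ d _ : bool => b && c && d).
lia.
Qed.

End SetSystems.

Section Hypercube.
Variable n : nat.
Implicit Types (v x y : cube n).

Lemma hamming_sym x y : hamming x y = hamming y x.
Proof. by apply: eq_card => i; rewrite !inE eq_sym. Qed.

Lemma hamming_refl x : hamming x x = 0.
Proof. by apply: eq_card0 => i; rewrite !inE eqxx. Qed.

Lemma hamming_gt0 x y : x != y -> 0 < hamming x y.
Proof.
apply: contraNT; rewrite -leqNgt leqn0 => /eqP/card0_eq x_y.
by apply/eqP/ffunP => i; have := x_y i; rewrite !inE => /negbFE/eqP.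
Qed.

Definition dset v x : {set 'I_n} := [set i | v i != x i].

Lemma hamming_dset v x y :
  hamming x y + 2 * #|dset v x :&: dset v y| = hamming v x + hamming v y.
Proof.
change (hamming x y + 2 * #|dset v x :&: dset v y| = #|dset v x| + #|dset v y|).
rewrite -cardsUI.
have -> : hamming x y = #|(dset v x :|: dset v y) :\: (dset v x :&: dset v y)|.
  by apply: eq_card => i; rewrite !inE; case: (x i); case: (y i); case: (v i).
rewrite cardsD (setIidPr (subset_trans (subsetIl _ _) (subsetUl _ _))).
have : #|dset v x :&: dset v y| <= #|dset v x :|: dset v y|.
  exact/subset_leq_card/(subset_trans (subsetIl _ _) (subsetUl _ _)).
lia.
Qed.

End Hypercube.

Section UpperBound.
Variable n : nat.
Local Notation N := (nbhd (@hamming n) 3).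
Local Notation hered := (hered_collapsible (@hamming n) 3).
Local Notation hsym := (@hamming_sym n).
Local Notation hrefl := (@hamming_refl n).
Implicit Types (v x y : cube n) (X : {set cube n}).

Definition sphere v k : {set cube n} := [set x | hamming v x == k].

Lemma nbhd_hamming v x : (x \in N v) = (0 < hamming v x <= 3).
Proof.
rewrite inE; have [->|xv] /= := eqVneq x v; first by rewrite hamming_refl.
by rewrite hamming_gt0 // eq_sym.
Qed.

Lemma hamming_sphere v k x : x \in sphere v k -> hamming v x = k.
Proof. by rewrite inE => /eqP. Qed.

Lemma card_dset_sphere v k x : x \in sphere v k -> #|dset v x| = k.
Proof. exact: hamming_sphere. Qed.

(* Distinct neighbours on a common sphere around [v] are at distance exactly 2. *)
Lemma dset_meet_sphere v k x y :
  x \in sphere v k -> y \in sphere v k -> y \in N x -> #|dset v x :&: dset v y| = k.-1.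
Proof.
rewrite !inE => /eqP vx /eqP vy /andP[/hamming_gt0 + xy3].
by rewrite hamming_sym; have := hamming_dset v x y; lia.
Qed.

Lemma sphere3_adj v x y :
  x \in sphere v 3 -> (hamming x y <= 3) = (#|dset v y| <= 2 * #|dset v x :&: dset v y|).
Proof.
rewrite inE => /eqP vx; have := hamming_dset v x y.
by change #|dset v y| with (hamming v y) => ?; apply/idP/idP; lia.
Qed.

Lemma shell2 v : N v :\: sphere v 3 :\: sphere v 1 = sphere v 2.
Proof.
by apply/setP => x; rewrite !in_setD nbhd_hamming !inE; case: (hamming v x) => [|[|[|[|]]]].
Qed.

Lemma hered_shell12 v : hered 3 (N v :\: sphere v 3).
Proof.
apply: (hered_cone hsym hrefl (C := sphere v 1)).
  move=> c z /setIP[+ _] /setDP[+ +] _; rewrite inE nbhd_hamming inE.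
  move=> /eqP vc /andP[_ vz] vz3; have := hamming_dset v c z; lia.
rewrite (shell2 v); apply: (hered_local hsym hrefl) => P Ps.
apply: (hered_local hsym hrefl) => Q /setIP[PQ Qs].
apply: (hered_local hsym hrefl) => R /setIP[QR /setIP[PR Rs]].
apply: (hered_clique hsym hrefl) => R1 R2.
move=> /setIP[RR1 /setIP[QR1 /setIP[PR1 R1s]]] /setIP[RR2 /setIP[QR2 /setIP[PR2 R2s]]] R21.
have meet12 : #|dset v R1 :&: dset v R2| = 1.
  apply: (transversal_pairs_meet (P := dset v P) (Q := dset v Q) (R := dset v R)).
  1-5: by apply: card_dset_sphere; assumption.
  1-9: by apply: (dset_meet_sphere (k := 2)); assumption.
  have := hamming_dset v R1 R2; have := hamming_gt0 R21.
  rewrite hamming_sym (hamming_sphere R1s) (hamming_sphere R2s); clear; lia.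
have := hamming_dset v R1 R2; rewrite (hamming_sphere R1s) (hamming_sphere R2s) meet12.
clear; lia.
Qed.

Lemma hered_step v X d :
  X \subset N v -> 3 <= d ->
  (forall y, y \in X :&: sphere v 3 -> N y :&: X \subset N v -> hered d (N y :&: X)) ->
  hered d.+1 X.
Proof.
move=> XN d3 clink; apply: (hered_elim hsym hrefl (Y := sphere v 3)).
  exact: hered_leq (leqW d3) (hered_sub (setSD _ XN) (@hered_shell12 v)).
by move=> y yX; apply: clink yX (subset_trans (subsetIr _ _) XN).
Qed.

Lemma nbhd_le x y : y \in N x -> hamming x y <= 3.
Proof. by rewrite inE => /andP[]. Qed.

Lemma hered_common_nbhd4 v B C D E :
  B \in sphere v 3 -> C \in sphere v 3 -> D \in sphere v 3 -> E \in sphere v 3 ->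
  C \in N B :&: N v -> D \in N C :&: (N B :&: N v) ->
  E \in N D :&: (N C :&: (N B :&: N v)) ->
  hered 3 (N E :&: (N D :&: (N C :&: (N B :&: N v)))).
Proof.
move=> B3 C3 D3 E3 HC HD HE.
apply: (hered_cone hsym hrefl (C := sphere v 3)); last first.
  apply: hered_sub (@hered_shell12 v); apply: setSD.
  by apply/subsetP => x; rewrite !in_setI => /and5P[].
move=> F Z /setIP[F3 HF] HZ _; move: HC HD HE HF HZ; rewrite !in_setI.
move=> /andP[BC _] /and3P[CD BD _] /and4P[DE CE BE _] /and5P[EF DF CF BF _].
move=> /and5P[_ DZ CZ BZ vZ].
have core_BCD : #|dset v B :&: dset v C :&: dset v D| = 2.
  by apply: (triples_sunflower (E := dset v E) (F := dset v F));
    solve [apply: card_dset_sphere; assumption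
          | apply: (dset_meet_sphere (k := 3)); assumption].
have core_BCF : #|dset v B :&: dset v C :&: dset v F| = 2.
  by apply: (triples_sunflower (D := dset v F) (E := dset v D) (F := dset v E));
    solve [apply: card_dset_sphere; assumption
          | apply: (dset_meet_sphere (k := 3)); assumption
          | rewrite setIC; apply: (dset_meet_sphere (k := 3)); assumption].
rewrite (sphere3_adj _ F3).
apply: (sunflower_petal_meet (B := dset v B) (C := dset v C) (D := dset v D));
  solve [assumption
        | apply: card_dset_sphere; assumption
        | apply: (dset_meet_sphere (k := 3)); assumption
        | by move: vZ; rewrite nbhd_hamming
        | by rewrite -sphere3_adj //; apply: nbhd_le].
Qed.

Lemma hered_nbhd v : hered 7 (N v).
Proof.
apply: hered_step (subxx _) _ _ => // B /setIP[_ B3] XB.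
apply: hered_step XB _ _ => // C /setIP[HC C3] XC.
apply: hered_step XC _ _ => // D /setIP[HD D3] XD.
apply: hered_step XD _ _ => // E /setIP[HE E3] _.
exact: hered_common_nbhd4.
Qed.

End UpperBound.

Lemma VR_cube_collapsible n : d_collapsible 8 (VR_cube n 3).
Proof.
have -> : VR_cube n 3 = VR_on (@hamming n) 3 setT.
  by apply/setP => A; rewrite !inE subsetT.
apply: (hered_local (@hamming_sym n) (@hamming_refl n)) (subxx _) => v _.
exact: hered_sub (subsetIl _ _) (@hered_nbhd n v).
Qed.

Section AntipodalObstruction.
Variables (T : finType) (K : complex T) (W : {set T}) (anti : T -> T).
Hypotheses (antiK : involutive anti) (anti_W : {homo anti : x / x \in W}).
Hypotheses (K_set0 : set0 \in K)
  (K_antipodal : forall s a, s \in K -> a \in s -> anti a \notin s)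
  (K_extend : forall g a, g \in K -> g \subset W -> a \in W -> anti a \notin g ->
                a |: g \in K).

(* On [W], the faces of [K] are thus exactly the subsets free of antipodal
   pairs: [induced] is the boundary of a cross-polytope. *)
Definition induced : complex T := [set A in K | A \subset W].

Lemma exists_antipodal_free (g : {set T}) :
  2 * #|g| < #|W| -> exists2 a, a \in W & (a \notin g) && (anti a \notin g).
Proof.
move=> gW; have /subsetPn[a aW] : ~~ (W \subset g :|: anti @: g).
  apply: contraTN gW => /subset_leq_card Wg; rewrite -leqNgt mul2n -addnn.
  by apply: leq_trans Wg (leq_trans (leq_card_setU _ _) _); rewrite leq_add2l leq_imset_card.
rewrite !inE negb_or => /andP[ag aag]; exists a; rewrite // ag /=.
by apply: contra aag => ?; rewrite -[a]antiK imset_f.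
Qed.

Lemma elem_collapse_induced d (L L' : complex T) :
  2 * d < #|W| -> L \subset K -> induced \subset L -> elem_collapse d L L' ->
  induced \subset L'.
Proof.
move=> dW LK KWL [g [s [gL cg [[sL _] gs] suniq eL']]].
apply/subsetP => A AKW; have /setIdP[AK AW] := AKW.
rewrite eL' !inE (subsetP KWL _ AKW) andbT; apply/negP => /andP[gA As].
have gW := subset_trans gA AW; have gK := subsetP LK _ gL.
(* [s] is the only maximal face above [g], so it contains every [b] that can
   be added to [g]; a free antipodal pair would then lie in the face [s] *)
have in_s b : b \in W -> anti b \notin g -> b \in s.
  move=> bW bg; have bgL : b |: g \in L.
    by apply: (subsetP KWL); rewrite inE K_extend // subUset sub1set bW gW.
  have [s' s'm bgs'] := maximal_face_exists bgL.
  by rewrite -(suniq _ s'm (subset_trans (subsetU1 _ _) bgs')) (subsetP bgs') ?setU11.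
have [a aW /andP[ag aag]] := exists_antipodal_free (leq_ltn_trans (leq_mul (leqnn 2) cg) dW).
have := K_antipodal (subsetP LK _ sL) (in_s a aW aag).
by rewrite in_s ?anti_W ?antiK.
Qed.

Lemma not_collapsible_antipodal d : 2 * d < #|W| -> ~ d_collapsible d K.
Proof.
move=> dW cK; have keep L L' : clos_refl_trans _ (elem_collapse d) L L' ->
    L \subset K -> induced \subset L -> induced \subset L'.
  elim=> [L1 L2 st|//|L1 L2 L3 c12 IH12 _ IH23] LK KWL.
  - exact: elem_collapse_induced st.
  - exact: IH23 (subset_trans (collapse_seq_sub c12) LK) (IH12 LK KWL).
have KWK : induced \subset K by apply/subsetP => A /setIdP[].
have /subsetP/(_ set0) := keep _ _ cK (subxx K) KWK.
by rewrite !inE K_set0 sub0set => /(_ isT).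
Qed.

End AntipodalObstruction.

Section LowSubcube.
Variables (n m : nat).
Hypothesis le_mn : m <= n.
Implicit Types (x y : cube n).

Definition low_cube : {set cube n} :=
  [set x : cube n | [forall i : 'I_n, (m <= i) ==> ~~ x i]].

Definition flip_low x : cube n := [ffun i : 'I_n => (i < m) (+) x i].

Definition low_coords : {set 'I_n} := [set i : 'I_n | i < m].

Lemma flip_lowK : involutive flip_low.
Proof. by move=> x; apply/ffunP => i; rewrite !ffunE addbA addbb. Qed.

Lemma flip_low_cube : {homo flip_low : x / x \in low_cube}.
Proof.
move=> x; rewrite !inE => /forallP xlow; apply/forallP => i; rewrite ffunE.
by case: leqP (implyP (xlow i)) => //= _ ->.
Qed.

Lemma card_low_coords : #|low_coords| = m.
Proof.
have -> : low_coords = widen_ord le_mn @: [set: 'I_m].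
  apply/setP => i; rewrite inE; apply/idP/imsetP => [lt_im|[j _ ->]].
    by exists (Ordinal lt_im) => //; apply: val_inj.
  by rewrite /= ltn_ord.
rewrite card_imset ?cardsT ?card_ord // => j k ejk.
by apply: ord_inj; have := congr1 val ejk.
Qed.

Lemma low_cube_diff x y : x \in low_cube -> y \in low_cube ->
  [set i | x i != y i] \subset low_coords.
Proof.
rewrite !inE => /forallP xlow /forallP ylow; apply/subsetP => i; rewrite !inE ltnNge.
apply: contra => le_mi.
by rewrite (negbTE (implyP (xlow i) le_mi)) (negbTE (implyP (ylow i) le_mi)).
Qed.

Lemma hamming_low x y : x \in low_cube -> y \in low_cube -> hamming x y <= m.
Proof. by move=> xl yl; rewrite -card_low_coords subset_leq_card ?low_cube_diff. Qed.

Lemma hamming_flip_low x : hamming x (flip_low x) = m.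
Proof.
rewrite -card_low_coords; apply: eq_card => i; rewrite !inE ffunE.
by case: (i < m); case: (x i).
Qed.

Lemma hamming_low_eq x y : x \in low_cube -> y \in low_cube ->
  hamming x y = m -> y = flip_low x.
Proof.
move=> xl yl xy_m; have diffE : [set i | x i != y i] = low_coords.
  by apply/eqP; rewrite eqEcard low_cube_diff // card_low_coords -xy_m /=.
apply/ffunP => i; rewrite ffunE; have /setP/(_ i) := diffE; rewrite !inE.
case: ltnP => [_|le_mi _]; first by case: (x i); case: (y i).
move: xl yl; rewrite !inE.
move=> /forallP/(_ i)/implyP/(_ le_mi) + /forallP/(_ i)/implyP/(_ le_mi).
by case: (x i); case: (y i).
Qed.

Lemma card_low_cube : 2 ^ m <= #|low_cube|.
Proof.
pose ext (f : {ffun 'I_m -> bool}) : cube n :=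
  [ffun i : 'I_n => if insub (val i) is Some j then f j else false].
have ext_inj : injective ext.
  move=> f g /ffunP efg; apply/ffunP => j; have := efg (widen_ord le_mn j).
  by rewrite !ffunE /= valK.
have -> : 2 ^ m = #|ext @: [set: {ffun 'I_m -> bool}]|.
  by rewrite card_imset // cardsT card_ffun card_bool card_ord.
apply: subset_leq_card.
apply/subsetP => _ /imsetP[f _ ->]; rewrite inE; apply/forallP => i; apply/implyP => le_mi.
by rewrite ffunE insubF // ltnNge le_mi.
Qed.

End LowSubcube.

Lemma VR_setU1 (T : finType) (dist : T -> T -> nat) r (g : {set T}) a :
  (forall x y, dist x y = dist y x) -> dist a a <= r ->
  g \in VR dist r -> (forall x, x \in g -> dist x a <= r) -> a |: g \in VR dist r.
Proof.
move=> dist_sym raa; rewrite !inE => gr ar.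
apply/forall_inP => x /setU1P[->|xg]; apply/forall_inP => y /setU1P[->|yg] //.
- by rewrite dist_sym ar.
- exact: ar.
- exact: forall_inP (forall_inP gr x xg) y yg.
Qed.

Lemma VR_cube_not_collapsible n k d : k < n -> d < 2 ^ k -> ~ d_collapsible d (VR_cube n k).
Proof.
move=> lt_kn lt_d.
apply: (not_collapsible_antipodal (@flip_lowK n k.+1) (@flip_low_cube n k.+1)).
- by rewrite inE; apply/forall_inP => x; rewrite in_set0.
- move=> s a /[!inE] /forall_inP sk a_s; apply/negP => fas.
  by have := forall_inP (sk a a_s) _ fas; rewrite hamming_flip_low // ltnn.
- move=> g a gK gW aW fag; apply: VR_setU1 gK _ => [||x xg]; first exact: hamming_sym.
    by rewrite hamming_refl.
  have xW := subsetP gW x xg; have := hamming_low lt_kn xW aW.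
  rewrite leq_eqVlt ltnS => /orP[/eqP/(hamming_low_eq lt_kn xW aW) ax|//].
  by move: fag; rewrite ax flip_lowK xg.
- by rewrite (leq_trans _ (card_low_cube lt_kn)) // expnS ltn_pmul2l.
Qed.

Theorem theorem1p6 (n : nat) : 4 <= n ->
  is_collapsibility_number (VR_cube n 3) 8.
Proof.
move=> n4; split=> [|d cd]; first exact: VR_cube_collapsible.
by rewrite leqNgt; apply/negP => d8; apply: (VR_cube_not_collapsible n4 d8 cd).
Qed.
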